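(* Let $H \cong K_n - M$, where $M$ is a matching of $K_n$, and let $g$ be a demand function for $H$. Let $V(M)$ denote the set of endpoints of edges in $M$. If $L$ is a fractional list-assignment for $H$ such that (i) for each $v\in V(H)\setminus V(M)$, $\mu(L(v)) \geq \sum_{u\in V(H)\setminus V(M)}g(u) + \sum_{uw\in M}\max\{g(u), g(w)\}$, (ii) for each $v\in V(M)$, $\mu(L(v)) \geq g(v) + \sum_{uw\in M,\, v\notin \{u,w\}}\max\{g(u), g(w)\}$, and (iii) for each $uv\in M$, $\mu(L(u)) + \mu(L(v)) \geq \sum_{w\in V(H)}g(w)$, then $H$ has a fractional $(g, L)$-coloring.
   Context: $\mu$ is Lebesgue measure. A demand function for a graph $H$ is a function $g: V(H)\to [0,1]\cap\mathbb{Q}$. A fractional list-assignment is a function $L$ assigning to each vertex a measurable subset $L(v)\subseteq[0,1]$. A fractional $(g,L)$-coloring of $H$ is an assignment $\phi$ of measurable sets $\phi(v)\subseteq L(v)$ with $\mu(\phi(v))\geq g(v)$ for every vertex and $\phi(u)\cap\phi(v)=\varnothing$ for every edge $uv$ of $H$. *)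

From mathcomp Require Import all_boot all_order all_algebra.
From mathcomp Require Import all_classical all_reals all_analysis.
Set Implicit Arguments. Unset Strict Implicit. Unset Printing Implicit Defensive.
Import Order.TTheory GRing.Theory Num.Theory.
Local Open Scope ring_scope.

(* Lebesgue measurability on R: Caratheodory-measurable sets for the outer
   measure built from the length of intervals, i.e. exactly the sigma-algebra
   on which the completed Lebesgue measure [completed_lebesgue_measure] lives. *)
Definition lmeas (R : realType) (A : set R) : Prop :=
  ((wlength (idfun : R -> R))^*%mu.-cara.-measurable A)%classic.

Definition lmu (R : realType) (A : set R) : \bar R :=
  @completed_lebesgue_measure R A.

(* M is a matching of the complete graph K_n on vertex set V (n = #|V|):
   a set of 2-element vertex sets that are pairwise disjoint. *)
Definition is_matching (V : finType) (M : {set {set V}}) : Prop :=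
  (forall e, e \in M -> #|e| = 2) /\
  (forall e1 e2, e1 \in M -> e2 \in M -> e1 != e2 -> [disjoint e1 & e2]).

Definition Hadj (V : finType) (M : {set {set V}}) (u v : V) : bool :=
  ((u != v) && ([set u; v] \notin M))%B.

Definition VM (V : finType) (M : {set {set V}}) : {set V} := finset.cover M.

Definition demand (V : finType) (g : V -> rat) : Prop :=
  forall v, 0 <= g v <= 1.

(* max{g(u), g(w)} for an edge e = {u, w} (g is nonnegative). *)
Definition emax (V : finType) (g : V -> rat) (e : {set V}) : rat :=
  \big[Num.max/0]_(u in e) g u.

Local Open Scope classical_set_scope.

Definition frac_list_assignment (R : realType) (V : finType) (L : V -> set R) : Prop :=
  forall v, lmeas (L v) /\ L v `<=` `[0, 1]%classic.

Definition frac_coloring (R : realType) (V : finType) (M : {set {set V}})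
    (g : V -> rat) (L : V -> set R) (phi : V -> set R) : Prop :=
  (forall v, [/\ lmeas (phi v), phi v `<=` L v & ((ratr (g v) : R)%:E <= lmu (phi v))%E]) /\
  (forall u v, Hadj M u v -> phi u `&` phi v = set0).

(* First, a fractional Hall theorem: measurable lists [L v] on a
   vertex set [W] contain pairwise disjoint sets of measures [g v] as soon as
   [sum_(u in S) g u <= mu (U_(u in S) L u)] for every [S] included in [W].  By
   induction on [W]: a vertex [v] takes an initial segment of [L v], grown
   continuously until either [v] is saturated or some [S] avoiding [v] becomes
   tight; in the latter case [S] and [W :\: S] are coloured separately, the
   latter with lists stripped of [U_(u in S) L u].
   Second, call an edge [uw] of [M] resolved when [g u = 0], [g w = 0] or
   [mu (L u `&` L w) = 0].  If all edges are resolved, (i)-(iii) imply Hall's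
   condition: a set [S] containing both ends of an edge of positive demands is
   bounded by (iii); otherwise it meets every edge of [M] in at most one vertex
   of positive demand and is bounded by (i) or (ii), according to whether it
   meets [V(H) \ V(M)].  An unresolved edge [uw] is resolved by giving a common
   piece of [L u `&` L w] of measure [min (g u) (g w) (mu (L u `&` L w))] to both
   [u] and [w], which are not adjacent in [H], and removing it from all lists;
   (i)-(iii) survive this. *)

From mathcomp Require Import all_boot all_order all_algebra.
From mathcomp Require Import all_classical all_reals all_analysis.
From mathcomp Require Import ring lra.
Import Order.TTheory GRing.Theory Num.Theory numFieldNormedType.Exports.
Local Open Scope ring_scope.
Local Open Scope classical_set_scope.
Set Implicit Arguments. Unset Strict Implicit. Unset Printing Implicit Defensive.

Section LebesgueUnitInterval.
Variable R : realType.
Implicit Types (A B C : set R) (a b x y t : R).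

Definition lmeas01 A := lmeas A /\ A `<=` `[0, 1].

(* [fine] sends an infinite measure to [0]: [lmuR] is only meaningful on
   [lmeas01] sets. *)
Definition lmuR A : R := fine (lmu A).

Lemma lmeas_itv_oc a b : lmeas `]a, b].
Proof. by apply: sub_caratheodory; apply: sub_sigma_algebra; exact: is_ocitv. Qed.

Lemma lmu_itv_oc a b : a <= b -> lmu `]a, b] = (b - a)%:E.
Proof.
move=> ab; rewrite /lmu /completed_lebesgue_measure /=.
rewrite /completed_lebesgue_stieltjes_measure /completed_measure_extension.
by rewrite measurable_mu_extE /= ?wlength_itv_bnd //; exact: is_ocitv.
Qed.

Lemma lmeas01_sub A B : lmeas01 B -> lmeas A -> A `<=` B -> lmeas01 A.
Proof. by move=> [_ B01] mA AB; split => // x /AB /B01. Qed.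

Lemma lmeas01I A B : lmeas01 A -> lmeas B -> lmeas01 (A `&` B).
Proof. by move=> [mA A01] mB; split; [exact: measurableI | move=> x [/A01]]. Qed.

Lemma lmeas01D A B : lmeas01 A -> lmeas B -> lmeas01 (A `\` B).
Proof. by move=> [mA A01] mB; split; [exact: measurableD | move=> x [/A01]]. Qed.

Lemma lmeas01U A B : lmeas01 A -> lmeas01 B -> lmeas01 (A `|` B).
Proof. by move=> [mA A01] [mB B01]; split; [exact: measurableU | move=> x [/A01|/B01]]. Qed.

Lemma lmuR_ge0 A : 0 <= lmuR A.
Proof. by rewrite fine_ge0 // measure_ge0. Qed.

Lemma le_lmu A B : lmeas A -> lmeas B -> A `<=` B -> (lmu A <= lmu B)%E.
Proof. by move=> mA mB AB; apply: le_measure; rewrite ?inE. Qed.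

Lemma lmu_lmuR A : lmeas01 A -> lmu A = (lmuR A)%:E.
Proof.
move=> [mA A01]; rewrite /lmuR fineK // ge0_fin_numE ?measure_ge0 //.
have A_sub : A `<=` `]-1, 1].
  move=> x /A01; rewrite /= !in_itv /= => /andP[x0 ->].
  by rewrite andbT (lt_le_trans _ x0) // ltrN10.
apply: le_lt_trans (le_lmu mA (lmeas_itv_oc _ _) A_sub) _.
by rewrite lmu_itv_oc ?ltry // lerN10.
Qed.

Lemma lmuR0 : lmuR set0 = 0.
Proof. by rewrite /lmuR /lmu measure0. Qed.

Lemma le_lmuR A B : lmeas01 B -> lmeas A -> A `<=` B -> lmuR A <= lmuR B.
Proof.
move=> B01 mA AB; have A01 := lmeas01_sub B01 mA AB.
by rewrite -lee_fin -!lmu_lmuR //; apply: le_lmu => //; case: B01.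
Qed.

Lemma lmuRU A B : lmeas01 A -> lmeas01 B -> A `&` B = set0 ->
  lmuR (A `|` B) = lmuR A + lmuR B.
Proof.
move=> A01 B01 AB; apply: EFin_inj; rewrite EFinD -!lmu_lmuR //; last exact: lmeas01U.
by apply: measureU => //; [case: A01 | case: B01].
Qed.

Lemma lmuRDI A B : lmeas01 A -> lmeas B -> lmuR A = lmuR (A `\` B) + lmuR (A `&` B).
Proof.
move=> A01 mB; apply: EFin_inj.
rewrite EFinD -!lmu_lmuR //; [|exact: lmeas01I|exact: lmeas01D].
by apply: measureDI => //; case: A01.
Qed.

Lemma lmuRD A B : lmeas01 A -> lmeas B -> B `<=` A -> lmuR (A `\` B) = lmuR A - lmuR B.
Proof. by move=> A01 mB BA; rewrite (lmuRDI A01 mB) (setIidr BA) addrK. Qed.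

Lemma lmuRUI A B : lmeas01 A -> lmeas01 B ->
  lmuR (A `|` B) = lmuR A + lmuR B - lmuR (A `&` B).
Proof.
move=> A01 B01; have [mB _] := B01.
rewrite (lmuRDI (lmeas01U A01 B01) mB) (lmuRDI A01 mB) setDUl setDv setU0.
by rewrite setIUl setIid (setUidr (@subIsetr _ A B)); lra.
Qed.

End LebesgueUnitInterval.

Section Roots.
Variable R : realType.

Lemma continuous_root (f : R -> R) a b : a <= b -> continuous f ->
  f b <= 0 -> 0 <= f a -> exists2 c, a <= c <= b & f c = 0.
Proof.
move=> ab fC fb fa.
have [|c] := IVT ab (continuous_subspaceT fC) (v := 0).
  by rewrite ge_min fb orbT le_max fa.
by rewrite in_itv; exists c.
Qed.

Lemma lipschitz_continuous (f : R -> R) :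
  (forall x y, `|f x - f y| <= `|x - y|) -> continuous f.
Proof.
move=> fL x; apply/cvgrPdist_le => e e0; exists e => //= y; rewrite /ball /= => xy.
exact: le_trans (fL x y) (ltW xy).
Qed.

Lemma first_common_root (I : eqType) (r : seq I) (F : I -> R -> R) a b :
  a <= b ->
  (forall i, i \in r -> continuous (F i)) ->
  (forall i, i \in r -> {homo F i : x y /~ x <= y}) ->
  (forall i, i \in r -> 0 <= F i a) ->
  (exists2 i, i \in r & F i b <= 0) ->
  exists2 c, a <= c <= b &
    (forall i, i \in r -> 0 <= F i c) /\ exists2 i, i \in r & F i c = 0.
Proof.
move=> ab; elim: r => [|i r IH] FC Fmono Fa; first by case.
move=> Fb; have inr j : j \in r -> j \in i :: r by rewrite inE orbC => ->.
have {}IH := IH (fun j jr => FC j (inr j jr)) (fun j jr => Fmono j (inr j jr))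
  (fun j jr => Fa j (inr j jr)).
(* [c'] is a first common root of [r], or [b]; if [F i] is already negative
   there, a root of [F i] before [c'] is the answer, by monotonicity. *)
have [c' /andP[ac' c'b] [r_ge0 r_root]] : exists2 c', a <= c' <= b &
    (forall j, j \in r -> 0 <= F j c') /\
    ((exists2 j, j \in r & F j c' = 0) \/ F i c' <= 0).
  have [[j jr Fjb]|no_root] := pselect (exists2 j, j \in r & F j b <= 0).
    by case: IH => [|c' c'ab [c'_ge0 c'_root]]; [exists j | exists c' => //; split; [|left]].
  exists b; first by rewrite ab lexx.
  split; last first.
    by right; case: Fb => j; rewrite inE => /orP[/eqP -> //|jr Fjb]; case: no_root; exists j.
  by move=> j jr; rewrite leNgt; apply/negP => Fjb; apply: no_root; exists j => //; exact: ltW.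
have [Fic'|Fic'] := leP 0 (F i c').
  exists c'; first by rewrite ac' c'b.
  split; first by move=> j; rewrite inE => /orP[/eqP -> //|]; exact: r_ge0.
  case: r_root => [[j jr Fjc']|Fic'0]; first by exists j => //; exact: inr.
  by exists i; rewrite ?mem_head //; apply/eqP; rewrite eq_le Fic'0.
have [c /andP[ac cc'] Fic] :=
  continuous_root ac' (FC i (mem_head _ _)) (ltW Fic') (Fa i (mem_head _ _)).
exists c; first by rewrite ac (le_trans cc').
split; last by exists i; rewrite ?mem_head.
move=> j; rewrite inE => /orP[/eqP -> |jr]; first by rewrite Fic.
exact: le_trans (r_ge0 j jr) (Fmono j (inr j jr) _ _ cc').
Qed.

End Roots.

Section Cut.
Variable R : realType.
Implicit Types (A B : set R) (x y t : R).

Definition cutoff A x := A `&` `]-1, x].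

Lemma lmeas01_cutoff A x : lmeas01 A -> lmeas01 (cutoff A x).
Proof. by move=> A01; apply: lmeas01I A01 (lmeas_itv_oc _ _). Qed.

Lemma cutoffN1 A : cutoff A (-1) = set0.
Proof.
apply/seteqP; split => z // [_]; rewrite /= in_itv /= => /andP[z1 z2].
by have := lt_le_trans z1 z2; rewrite ltxx.
Qed.

Lemma cutoff1 A : lmeas01 A -> cutoff A 1 = A.
Proof.
move=> [_ A01]; apply/setIidl => z /A01; rewrite /= !in_itv /= => /andP[z0 ->].
by rewrite andbT (lt_le_trans _ z0) // ltrN10.
Qed.

Lemma lmuR_cutoff_incr A x y : lmeas01 A -> x <= y ->
  0 <= lmuR (cutoff A y) - lmuR (cutoff A x) <= y - x.
Proof.
move=> A01 xy; have cutxy : cutoff A x `<=` cutoff A y.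
  move=> z [Az]; rewrite /= !in_itv /= => /andP[z1 zx].
  by split => //; rewrite /= in_itv /= z1 (le_trans zx xy).
have Ay01 := lmeas01_cutoff y A01.
rewrite -(lmuRD Ay01 (lmeas01_cutoff x A01).1 cutxy) lmuR_ge0 /= -lee_fin.
rewrite -lmu_lmuR; last exact: lmeas01D Ay01 (lmeas01_cutoff x A01).1.
rewrite -lmu_itv_oc //.
apply: le_lmu (lmeas01D Ay01 (lmeas01_cutoff x A01).1).1 (lmeas_itv_oc _ _) _.
move=> z [[Az]]; rewrite /= !in_itv /= => /andP[z1 ->]; rewrite andbT ltNge.
by apply: contra_notN => zx; split => //; rewrite /= in_itv /= z1.
Qed.

Lemma lmuR_setD_cutoff A B x : lmeas01 A -> lmeas01 B ->
  lmuR (A `\` cutoff B x) = lmuR A - lmuR (cutoff (A `&` B) x).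
Proof. by move=> A01 B01; rewrite (lmuRDI A01 (lmeas01_cutoff x B01).1) /cutoff setIA addrK. Qed.

Lemma lmuR_setD_cutoff_nonincr A B : lmeas01 A -> lmeas01 B ->
  {homo (fun x => lmuR (A `\` cutoff B x)) : x y /~ x <= y}.
Proof.
move=> A01 B01 x y xy; rewrite !lmuR_setD_cutoff // lerD2l lerN2.
by have /andP[] := lmuR_cutoff_incr (lmeas01I A01 B01.1) xy; rewrite subr_ge0.
Qed.

Lemma lmuR_setD_cutoff_lipschitz A B x y : lmeas01 A -> lmeas01 B ->
  `|lmuR (A `\` cutoff B x) - lmuR (A `\` cutoff B y)| <= `|x - y|.
Proof.
move=> A01 B01; rewrite !lmuR_setD_cutoff //.
rewrite (_ : forall a b c : R, a - b - (a - c) = c - b); last by move=> *; ring.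
wlog xy : x y / x <= y.
  by move=> H; case: (leP x y) => [/H //|/ltW/H]; rewrite distrC [`|y - x|]distrC.
have /andP[h1 h2] := lmuR_cutoff_incr (lmeas01I A01 B01.1) xy.
by rewrite [`|x - y|]distrC (ger0_norm h1) ger0_norm // subr_ge0.
Qed.

Lemma lmeas01_chunk A t : lmeas01 A -> 0 <= t <= lmuR A ->
  exists C, [/\ lmeas C, C `<=` A & lmuR C = t].
Proof.
move=> A01 /andP[t0 tA].
pose f x := lmuR (A `\` cutoff A x) - (lmuR A - t).
have fC : continuous f.
  apply: lipschitz_continuous => x y; rewrite /f.
  rewrite (_ : forall a b c : R, a - c - (b - c) = a - b); last by move=> *; ring.
  exact: lmuR_setD_cutoff_lipschitz.
have [||c _ fc] := continuous_root (le_trans (lerN10 R) ler01) fC.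
- by rewrite /f cutoff1 // setDv lmuR0 sub0r oppr_le0 subr_ge0.
- by rewrite /f cutoffN1 setD0 subKr.
exists (cutoff A c); split; [exact: (lmeas01_cutoff c A01).1 | exact: subIsetl |].
by move: fc; rewrite /f lmuR_setD_cutoff // setIid; lra.
Qed.

End Cut.

Section FractionalHall.
Variables (R : realType) (V : finType).
Implicit Types (W S X Y T : {set V}) (L : V -> set R) (g : V -> R) (C : set R) (adj : rel V).

Definition listU L S : set R := \bigcup_(v in [set` S]) L v.

Lemma listU_sub L S v : v \in S -> L v `<=` listU L S.
Proof. by move=> vS x Lx; exists v. Qed.

Lemma lmeas01_listU L S : (forall v, lmeas01 (L v)) -> lmeas01 (listU L S).
Proof.
move=> L01; split; first by apply: fin_bigcup_measurable => // v _; case: (L01 v).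
by move=> x [v _ /(proj2 (L01 v))].
Qed.

Lemma listU1 L v : listU L [set v]%SET = L v.
Proof.
apply/seteqP; split => [x [u]|x Lx]; first by rewrite /= inE => /eqP ->.
by exists v; rewrite /= ?inE.
Qed.

Lemma listU_setD L C S : listU (fun u => L u `\` C) S = listU L S `\` C.
Proof.
apply/seteqP; split => [x [u uS [Lu Cx]]|x [[u uS Lu] Cx]]; last by exists u.
by split => //; exists u.
Qed.

Lemma listU_setU L X Y : listU L (X :|: Y) = listU L X `|` listU L Y.
Proof.
apply/seteqP; split => [x [u]|x [[u uX Lu]|[u uY Lu]]]; last 2 first.
- by exists u; rewrite /= ?inE ?uX.
- by exists u; rewrite /= ?inE ?uY ?orbT.
by rewrite /= inE => /orP[uX|uY] Lu; [left|right]; exists u.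
Qed.

Definition hall_cond W L g :=
  forall S, S \subset W -> \sum_(u in S) g u <= lmuR (listU L S).

Definition fcoloring W adj L g (phi : V -> set R) :=
  {in W, forall v, [/\ lmeas (phi v), phi v `<=` L v & g v <= lmuR (phi v)]} /\
  {in W &, forall u w, adj u w -> phi u `&` phi w = set0}.

Lemma fcoloring_subrel W adj adj' L g phi : subrel adj adj' ->
  fcoloring W adj' L g phi -> fcoloring W adj L g phi.
Proof. by move=> sub [col disj]; split=> // u w uW wW /sub; exact: disj. Qed.

Definition shift_demand T (t : R) g u := if u \in T then g u - t else g u.

Lemma shift_demand_in T t g u : u \in T -> shift_demand T t g u = g u - t.
Proof. by rewrite /shift_demand => ->. Qed.

Lemma shift_demand_out T t g u : u \notin T -> shift_demand T t g u = g u.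
Proof. by rewrite /shift_demand => /negbTE ->. Qed.

Lemma shift_demand_ge0 T t g : (forall u, 0 <= g u) -> {in T, forall u, t <= g u} ->
  forall u, 0 <= shift_demand T t g u.
Proof. by move=> g0 tg u; rewrite /shift_demand; case: ifP => // /tg; rewrite subr_ge0. Qed.

Lemma hall_cond_sub W W' L g : W' \subset W -> hall_cond W L g -> hall_cond W' L g.
Proof. by move=> W'W hall S SW'; apply: hall; exact: fintype.subset_trans SW' W'W. Qed.

Lemma hall_cond_tight W S L g : (forall v, lmeas01 (L v)) -> hall_cond W L g ->
  S \subset W -> \sum_(u in S) g u = lmuR (listU L S) ->
  hall_cond (W :\: S) (fun u => L u `\` listU L S) g.
Proof.
move=> L01 hall SW tight X; rewrite finset.subsetD => /andP[XW XS]; rewrite listU_setD.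
have := hall (X :|: S); rewrite finset.subUset XW SW listU_setU => /(_ isT).
rewrite (eq_bigl [predU X & S]) ?bigU //=; last by move=> u; rewrite !inE.
have XS01 := lmeas01U (lmeas01_listU X L01) (lmeas01_listU S L01).
rewrite (lmuRDI XS01 (lmeas01_listU S L01).1) setDUl setDv setU0.
by rewrite setIUl setIid (setUidr (@subIsetr _ _ _)) tight; lra.
Qed.

Lemma fcoloring_glue W S adj L g phiS phiR : S \subset W ->
  fcoloring S adj L g phiS -> fcoloring (W :\: S) adj (fun u => L u `\` listU L S) g phiR ->
  fcoloring W adj L g (fun u => if u \in S then phiS u else phiR u).
Proof.
move=> SW [colS disjS] [colR disjR].
have WS u : u \in W -> u \notin S -> u \in W :\: S by move=> uW uS; rewrite inE uS.
have phiS_sub u : u \in S -> phiS u `<=` listU L S.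
  by move=> uS; have [_ sub _] := colS u uS; move=> x /sub; exact: listU_sub.
have phiR_out u : u \in W -> u \notin S -> phiR u `&` listU L S = set0.
  move=> uW uS; have [_ sub _] := colR u (WS u uW uS).
  by apply/disjoints_subset => x /sub [].
split=> [u uW|u w uW wW uw].
  case: ifP => [uS|/negbT uS]; first exact: colS.
  by have [? sub ?] := colR u (WS u uW uS); split => // x /sub [].
case: ifP => uS; case: ifP => wS; first exact: disjS.
- by rewrite setIC; apply: subsetI_eq0 (phiR_out _ wW (negbT wS)) => //; exact: phiS_sub.
- by apply: subsetI_eq0 (phiR_out _ uW (negbT uS)) => //; exact: phiS_sub.
- exact: disjR (WS u uW (negbT uS)) (WS w wW (negbT wS)) uw.
Qed.

Lemma fcoloring_add_piece W T adj L g C phi : (forall v, lmeas01 (L v)) -> lmeas C ->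
  {in T, forall u, C `<=` L u} -> {in T &, forall u w, ~~ adj u w} ->
  fcoloring W adj (fun u => L u `\` C) (shift_demand T (lmuR C) g) phi ->
  fcoloring W adj L g (fun u => if u \in T then phi u `|` C else phi u).
Proof.
move=> L01 mC CL Tind [col disj].
have phiC u : u \in W -> phi u `&` C = set0.
  by move=> uW; have [_ sub _] := col u uW; apply/disjoints_subset => x /sub [].
split=> [u uW|u w uW wW uw].
  have [mphi sub gphi] := col u uW; rewrite /shift_demand in gphi.
  case: ifP => uT in gphi *; last by split => // x /sub [].
  have phi01 : lmeas01 (phi u) by apply: lmeas01_sub (L01 u) mphi _ => x /sub [].
  have C01 : lmeas01 C := lmeas01_sub (L01 u) mC (CL u uT).
  split; [exact: measurableU | by move=> x [/sub [] | /(CL u uT)] |].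
  by rewrite lmuRU ?phiC //; lra.
case: ifP => uT; case: ifP => wT.
- by move: (Tind u w uT wT); rewrite uw.
- by rewrite setIUl disj // set0U setIC phiC.
- by rewrite setIUr disj // set0U phiC.
- exact: disj.
Qed.

Lemma fcoloring_extend0 W adj L g phi v : g v <= 0 -> fcoloring (W :\ v) adj L g phi ->
  fcoloring W adj L g (fun u => if u == v then set0 else phi u).
Proof.
move=> gv [col disj].
have Wv u : u \in W -> u != v -> u \in W :\ v by move=> uW uv; rewrite !inE uv.
split=> [u uW|u w uW wW uw].
  case: eqP => [->|/eqP uv]; last exact: col (Wv u uW uv).
  by split; [exact: measurable0 | | rewrite lmuR0].
case: eqP => [_|/eqP uv]; first exact: set0I.
case: eqP => [_|/eqP wv]; first exact: setI0.
exact: disj (Wv u uW uv) (Wv w wW wv) uw.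
Qed.

Lemma hall_cond_remove_piece W L g v C : (forall u, lmeas01 (L u)) -> v \in W ->
  lmeas C -> C `<=` L v -> hall_cond W L g ->
  (forall S, S != finset.set0 -> S \subset W :\ v ->
     \sum_(u in S) g u <= lmuR (listU L S `\` C)) ->
  hall_cond W (fun u => L u `\` C) (shift_demand [set v]%SET (lmuR C) g).
Proof.
move=> L01 vW mC CLv hall slack S SW; rewrite listU_setD.
have [vS|vNS] := boolP (v \in S).
  rewrite (big_setD1 v vS) /= {1}/shift_demand finset.in_set1 eqxx.
  rewrite (eq_bigr g) => [|u]; last first.
    by rewrite !inE => /andP[uv _]; rewrite shift_demand_out // finset.in_set1.
  rewrite lmuRD //; [|exact: lmeas01_listU|by move=> x /CLv; exact: listU_sub].
  by have := hall S SW; rewrite (big_setD1 v vS) /=; lra.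
rewrite (eq_bigr g) => [|u uS]; last first.
  by rewrite shift_demand_out // finset.in_set1; apply: contraNneq vNS => <-.
have [->|S0] := eqVneq S finset.set0; first by rewrite big_set0 lmuR_ge0.
by apply: slack; rewrite // finset.subsetD1 SW.
Qed.

Lemma hall_shave W L g v : (forall u, lmeas01 (L u)) -> (forall u, 0 <= g u) ->
  v \in W -> hall_cond W L g ->
  let L' C u := L u `\` C in let g' C := shift_demand [set v]%SET (lmuR C) g in
  exists C, [/\ lmeas C, C `<=` L v, lmuR C <= g v, hall_cond W (L' C) (g' C) &
    lmuR C = g v \/ exists S, [/\ S != finset.set0, S \subset W :\ v &
      \sum_(u in S) g' C u = lmuR (listU (L' C) S)]].
Proof.
move=> L01 g0 vW hall L' g'.
have gv : g v <= lmuR (L v).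
  by have := hall [set v]%SET; rewrite finset.sub1set vW big_set1 listU1; apply.
(* [F (Some X) x] is the Hall slack of [X] once [cutoff (L v) x] is removed from
   the lists, [F None x] the demand of [v] left uncovered by [cutoff (L v) x]. *)
pose A (i : option {set V}) := if i is Some X then listU L X else L v.
pose d (i : option {set V}) := if i is Some X then \sum_(u in X) g u else lmuR (L v) - g v.
pose F i (x : R) := lmuR (A i `\` cutoff (L v) x) - d i.
pose sets := [set X : {set V} | (X != finset.set0) && (X \subset W :\ v)]%SET.
pose r := None :: [seq Some X | X <- enum sets].
have A01 i : lmeas01 (A i) by case: i => [X|]; [exact: lmeas01_listU | exact: L01].
have in_r X : (Some X \in r) = (X \in sets).
  by rewrite inE /= mem_map ?mem_enum //; exact: Some_inj.
have [||||c _ [F_ge0 [i ir Fc0]]] :=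
  first_common_root (r := r) (F := F) (le_trans (lerN10 R) ler01).
- move=> i _; apply: lipschitz_continuous => x y; rewrite /F.
  rewrite (_ : forall a b c : R, a - c - (b - c) = a - b); last by move=> *; ring.
  exact: lmuR_setD_cutoff_lipschitz.
- by move=> i _ x y xy; rewrite /F lerD2r; exact: lmuR_setD_cutoff_nonincr.
- move=> [X|] /=; rewrite /F cutoffN1 setD0 /=; last by rewrite subKr.
  rewrite in_r inE subr_ge0 => /andP[_ XWv]; apply: hall.
  exact: fintype.subset_trans XWv (subD1set W v).
- by exists None; rewrite ?mem_head // /F /= cutoff1 // setDv lmuR0 sub0r oppr_le0 subr_ge0.
pose C := cutoff (L v) c.
have mC : lmeas C := (lmeas01_cutoff c (L01 v)).1.
have CLv : C `<=` L v := @subIsetl _ _ _.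
have FNone : F None c = g v - lmuR C by rewrite /F /= lmuRD //; ring.
have FSome S : F (Some S) c = lmuR (listU (L' C) S) - \sum_(u in S) g u by rewrite /F listU_setD.
have g'S S : S \in sets -> \sum_(u in S) g' C u = \sum_(u in S) g u.
  rewrite inE => /andP[_ SWv]; apply: eq_bigr => u /(fintype.subsetP SWv).
  by rewrite !inE => /andP[uv _]; rewrite /g' shift_demand_out // finset.in_set1.
exists C; split => //.
- by have := F_ge0 None (mem_head _ _); rewrite FNone subr_ge0.
- apply: hall_cond_remove_piece => // S S0 SWv.
  have := F_ge0 (Some S); rewrite FSome listU_setD subr_ge0; apply.
  by rewrite in_r inE S0 SWv.
case: i ir Fc0 => [X|] ir; last by rewrite FNone; left; lra.
have Xsets : X \in sets by rewrite -in_r.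
right; exists X; move: (Xsets); rewrite inE => /andP[X0 XWv]; split => //.
by rewrite g'S //; move: Fc0; rewrite FSome; lra.
Qed.

Theorem hall_fcoloring W L g : (forall v, lmeas01 (L v)) -> (forall v, 0 <= g v) ->
  hall_cond W L g -> exists phi, fcoloring W (fun u w => u != w) L g phi.
Proof.
elim: {W}#|W|.+1 {-2}W (ltnSn #|W|) L g => // n IH W ltWn L g L01 g0 hall.
have [->|[v vW]] := set_0Vmem W.
  by exists (fun _ => set0); split => [u|u w]; rewrite inE.
have [C [mC CLv Cgv hallC tight]] := hall_shave L01 g0 vW hall.
set L' := fun u => L u `\` C; set g' := shift_demand [set v]%SET (lmuR C) g.
have L'01 u : lmeas01 (L' u) := lmeas01D (L01 u) mC.
have g'0 : forall u, 0 <= g' u.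
  by apply: shift_demand_ge0 => // u; rewrite finset.in_set1 => /eqP ->.
have ltW u : u \in W -> (#|W :\ u| < n)%N by move=> uW; rewrite (cardsD1 u W) uW in ltWn.
suff [phi col] : exists phi, fcoloring W (fun u w => u != w) L' g' phi.
  exists (fun u => if u \in [set v]%SET then phi u `|` C else phi u).
  apply: fcoloring_add_piece col => // [u|u w]; rewrite !finset.in_set1 => /eqP -> //.
  by move=> /eqP ->; rewrite negbK.
case: tight => [Csat|[S [S0 SWv Stight]]].
  have [phi col] := IH (W :\ v) (ltW v vW) L' g' L'01 g'0 (hall_cond_sub (subD1set W v) hallC).
  exists (fun u => if u == v then set0 else phi u); apply: fcoloring_extend0 col.
  by rewrite /g' shift_demand_in ?finset.in_set1 // Csat subrr.
have SW : S \subset W := fintype.subset_trans SWv (subD1set W v).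
have ltS : (#|S| < n)%N := leq_ltn_trans (subset_leq_card SWv) (ltW v vW).
have ltWS : (#|W :\: S| < n)%N.
  have [u uS] := set0Pn _ S0; apply: leq_ltn_trans (ltW u (fintype.subsetP SW u uS)).
  by apply: subset_leq_card; rewrite finset.subsetD1 subsetDl inE uS.
have [phiS colS] := IH S ltS L' g' L'01 g'0 (hall_cond_sub SW hallC).
have [phiR colR] := IH (W :\: S) ltWS _ g' (fun u => lmeas01D (L'01 u) (lmeas01_listU S L'01).1)
  g'0 (hall_cond_tight L'01 hallC SW Stight).
by exists (fun u => if u \in S then phiS u else phiR u); exact: fcoloring_glue.
Qed.

End FractionalHall.

Section Matchings.
Variables (V : finType) (M : {set {set V}}).
Hypothesis hM : is_matching M.

Lemma matching_trivIset : finset.trivIset M.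
Proof. by apply/finset.trivIsetP => e f eM fM; exact: hM.2. Qed.

Lemma matching_disjoint e f x : e \in M -> f \in M -> e != f -> x \in e -> x \notin f.
Proof.
move=> eM fM ef xe; apply: contra ef => xf; apply/eqP.
rewrite -(finset.def_pblock matching_trivIset eM xe).
by rewrite (finset.def_pblock matching_trivIset fM xf).
Qed.

Lemma matching_edgeP e : e \in M -> exists u w, u != w /\ e = [set u; w]%SET.
Proof. by move=> eM; apply/cards2P; rewrite hM.1. Qed.

Lemma matching_edge_eq e u w : e \in M -> u \in e -> w \in e -> u != w -> e = [set u; w]%SET.
Proof.
move=> eM ue we uw; apply/eqP; rewrite eq_sym eqEcard hM.1 // cards2 uw andbT.
by rewrite finset.subUset !finset.sub1set ue we.
Qed.

Lemma matching_edge_not_Hadj e u w : e \in M -> u \in e -> w \in e -> ~~ Hadj M u w.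
Proof.
move=> eM ue we; have [->|uw] := eqVneq u w; first by rewrite /Hadj eqxx.
by rewrite /Hadj -(matching_edge_eq eM ue we uw) eM andbF.
Qed.

End Matchings.

Lemma eq_set2P (V : finType) (a b u w : V) : a != b -> [set a; b]%SET = [set u; w]%SET ->
  (a = u /\ b = w) \/ (a = w /\ b = u).
Proof.
move=> ab E; have /set2P[au|aw] : a \in [set u; w]%SET by rewrite -E set21.
- have /set2P[bu|] : b \in [set u; w]%SET by rewrite -E set22.
    by rewrite bu -au eqxx in ab.
  by left.
- have /set2P[|bw] : b \in [set u; w]%SET by rewrite -E set22.
    by right.
  by rewrite bw -aw eqxx in ab.
Qed.

Section EdgeMax.
Variables (R : realType) (V : finType).
Implicit Types (g : V -> R) (e f T : {set V}) (t : R).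

Definition emaxR g e : R := \big[Num.max/0]_(u in e) g u.

Lemma ratr_emax (g : V -> rat) e : ratr (emax g e) = emaxR (fun u => ratr (g u)) e.
Proof. exact: (big_morph _ (@maxr_rat R) (rmorph0 _)). Qed.

Lemma le_emaxR g e x : x \in e -> g x <= emaxR g e.
Proof. exact: le_bigmax_cond. Qed.

Lemma emaxR_ge0 g e : 0 <= emaxR g e.
Proof. exact: bigmax_ge_id. Qed.

Lemma emaxR_shift g e t x : x \in e -> 0 <= t <= g x ->
  emaxR (shift_demand e t g) e = emaxR g e - t.
Proof.
move=> xe /andP[t0 tx]; apply/le_anti/andP; split.
  apply: bigmax_le => [|u ue]; first by rewrite subr_ge0 (le_trans tx) ?le_emaxR.
  by rewrite shift_demand_in // lerD2r le_emaxR.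
rewrite lerBlDr; apply: bigmax_le => [|u ue]; first by rewrite addr_ge0 ?emaxR_ge0.
by rewrite -lerBlDr -(shift_demand_in t g ue) le_emaxR.
Qed.

Lemma emaxR_shift_out g e f t : {in f, forall u, u \notin e} ->
  emaxR (shift_demand e t g) f = emaxR g f.
Proof. by move=> fe; apply: eq_bigr => u /fe; exact: shift_demand_out. Qed.

Lemma sum_shift_demand g T t : \sum_u shift_demand T t g u = \sum_u g u - t *+ #|T|.
Proof.
rewrite (eq_bigr (fun u => g u - (if u \in T then t else 0))) => [|u _]; last first.
  by rewrite /shift_demand; case: ifP; rewrite ?subr0.
by rewrite sumrB -big_mkcond sumr_const.
Qed.

End EdgeMax.

Lemma ler_sum_sub (R : numDomainType) (I : finType) (P Q : pred I) (F : I -> R) :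
  (forall i, 0 <= F i) -> (forall i, P i -> Q i) -> \sum_(i | P i) F i <= \sum_(i | Q i) F i.
Proof.
move=> F0 PQ; rewrite [leRHS]big_mkcond [leLHS]big_mkcond; apply: ler_sum => i _.
by case: ifP => [/PQ -> //|_]; case: ifP.
Qed.

Lemma min3_cases (R : realDomainType) (x y z : R) :
  let m := Num.min x (Num.min y z) in [\/ m = x, m = y | m = z].
Proof.
by rewrite /= !minEle; case: ifP => _; [exact: Or31 | case: ifP => _; [exact: Or32 | exact: Or33]].
Qed.

Section MatchingConditions.
Variables (R : realType) (V : finType) (M : {set {set V}}).
Implicit Types (g : V -> R) (L : V -> set R) (S : {set V}).

Definition matching_conds g L :=
  [/\ forall v, v \notin VM M ->
        \sum_(u | u \notin VM M) g u + \sum_(e in M) emaxR g e <= lmuR (L v),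
      forall v, v \in VM M -> g v + \sum_(e in M | v \notin e) emaxR g e <= lmuR (L v) &
      forall u v, u != v -> [set u; v]%SET \in M -> \sum_w g w <= lmuR (L u) + lmuR (L v)].

Definition resolved g L u w := [\/ g u = 0, g w = 0 | lmuR (L u `&` L w) = 0].

Section ResolvedHall.
Variables (g : V -> R) (L : V -> set R).
Hypotheses (hM : is_matching M) (L01 : forall v, lmeas01 (L v)) (g0 : forall v, 0 <= g v).
Hypothesis conds : matching_conds g L.

Let good S := forall u w, u != w -> [set u; w]%SET \in M -> u \in S -> w \in S ->
  g u = 0 \/ g w = 0.

Lemma sum_matching_split S : \sum_(x in S) g x =
  \sum_(x in S | x \notin VM M) g x + \sum_(e in M) \sum_(x in e | x \in S) g x.
Proof.
rewrite (bigID (fun x => x \in VM M)) /= addrC; congr (_ + _).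
rewrite -(big_trivIset_cond _ (matching_trivIset hM)).
by apply: eq_bigl => x; rewrite andbC.
Qed.

Lemma le_lmuR_listU S v : v \in S -> lmuR (L v) <= lmuR (listU L S).
Proof. by move=> vS; apply: le_lmuR (lmeas01_listU S L01) (L01 v).1 (listU_sub vS). Qed.

Lemma resolved_hall_bad S u w : u != w -> [set u; w]%SET \in M -> u \in S -> w \in S ->
  g u != 0 -> g w != 0 -> resolved g L u w -> \sum_(x in S) g x <= lmuR (listU L S).
Proof.
move=> uw uwM uS wS /eqP gu /eqP gw [//|//|Iuw].
have [_ _ /(_ u w uw uwM) sumV] := conds.
have LUS : lmuR (L u `|` L w) <= lmuR (listU L S).
  apply: le_lmuR (lmeas01_listU S L01) (lmeas01U (L01 u) (L01 w)).1 _.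
  by move=> x [/(listU_sub uS)|/(listU_sub wS)].
have sumS : \sum_(x in S) g x <= \sum_x g x by exact: ler_sum_sub.
by move: LUS; rewrite lmuRUI // Iuw; lra.
Qed.

Lemma edge_part_witness S e v : good S -> e \in M -> v \in e -> v \in S ->
  exists y, [/\ y \in e, y \in S & \sum_(x in e | x \in S) g x <= g y].
Proof.
move=> goodS eM ve vS; have [u [w [uw Ee]]] := matching_edgeP hM eM; subst e.
rewrite big_mkcondr /= big_setU1 ?big_set1 ?inE //=.
have [uS|uNS] := boolP (u \in S); have [wS|wNS] := boolP (w \in S).
- have [gu|gw] := goodS u w uw eM uS wS.
    by exists w; rewrite set22 wS gu add0r.
  by exists u; rewrite set21 uS gw addr0.
- by exists u; rewrite set21 uS addr0.
- by exists w; rewrite set22 wS add0r.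
- by move: ve vS => /set2P[] ->; rewrite ?(negbTE uNS) ?(negbTE wNS).
Qed.

Lemma edge_part_le_emax S e : good S -> e \in M -> \sum_(x in e | x \in S) g x <= emaxR g e.
Proof.
move=> goodS eM; have [[v /andP[ve vS]]|none] := pselect (exists v, (v \in e) && (v \in S)).
  have [y [ye _ le_y]] := edge_part_witness goodS eM ve vS.
  exact: le_trans le_y (le_emaxR g ye).
rewrite big1 ?emaxR_ge0 // => x /andP[xe xS].
by case: none; exists x; rewrite xe.
Qed.

Lemma resolved_hall_outside S a : good S -> a \in S -> a \notin VM M ->
  \sum_(x in S) g x <= lmuR (listU L S).
Proof.
move=> goodS aS aNVM; have [/(_ a aNVM) conda _ _] := conds.
apply: le_trans (le_lmuR_listU aS); apply: le_trans conda.
rewrite sum_matching_split; apply: lerD; first by apply: ler_sum_sub => // x /andP[].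
by apply: ler_sum => e eM; exact: edge_part_le_emax.
Qed.

Lemma resolved_hall_inside S v : good S -> S \subset VM M -> v \in S ->
  \sum_(x in S) g x <= lmuR (listU L S).
Proof.
move=> goodS SVM vS; have vVM : v \in VM M := fintype.subsetP SVM v vS.
have evM := finset.pblock_mem vVM.
have vev : v \in finset.pblock M v by rewrite finset.mem_pblock.
have [y [yev yS sum_ev]] := edge_part_witness goodS evM vev vS.
have [_ /(_ y (fintype.subsetP SVM y yS)) condy _] := conds.
apply: le_trans (le_lmuR_listU yS); apply: le_trans condy.
rewrite sum_matching_split big1 ?add0r => [|x /andP[/(fintype.subsetP SVM) -> //]].
rewrite (bigD1 _ evM) /=; apply: lerD => //.
rewrite (eq_bigl (fun e => (e \in M) && (y \notin e))) => [|e].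
  by apply: ler_sum => e /andP[eM _]; exact: edge_part_le_emax.
apply/andP/andP => -[eM H]; split => //; last by apply: contraNneq H => ->.
by rewrite eq_sym in H; exact (matching_disjoint hM evM eM H yev).
Qed.

Lemma resolved_hall_cond : (forall u w, u != w -> [set u; w]%SET \in M -> resolved g L u w) ->
  hall_cond [set: V]%SET L g.
Proof.
move=> res S _.
have [[u [w [uw uwM uS wS [gu gw]]]]|nobad] := pselect (exists u w,
    [/\ u != w, [set u; w]%SET \in M, u \in S, w \in S & g u != 0 /\ g w != 0]).
  exact: resolved_hall_bad uw uwM uS wS gu gw (res u w uw uwM).
have goodS : good S.
  move=> u w uw uwM uS wS; have [gu|gu] := eqVneq (g u) 0; [by left | right].
  by apply/eqP/negPn/negP => gw; apply: nobad; exists u, w.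
have [[a /andP[aS aNVM]]|inside] := pselect (exists a, (a \in S) && (a \notin VM M)).
  exact: resolved_hall_outside goodS aS aNVM.
have [->|[v vS]] := set_0Vmem S; first by rewrite big_set0 lmuR_ge0.
apply: resolved_hall_inside goodS _ vS; apply/fintype.subsetP => x xS.
by apply/negPn/negP => xNVM; apply: inside; exists x; rewrite xS.
Qed.

End ResolvedHall.

Section ShiftEdge.
Variables (g : V -> R) (L : V -> set R) (u w : V) (C : set R).
Hypotheses (hM : is_matching M) (L01 : forall v, lmeas01 (L v)).
Hypotheses (uw : u != w) (uwM : [set u; w]%SET \in M).
Hypotheses (mC : lmeas C) (CLu : C `<=` L u) (Cu : lmuR C <= g u).

Let e := [set u; w]%SET.
Let g' := shift_demand e (lmuR C) g.
Let L' v := L v `\` C.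

Lemma lmuR_setD_piece v : lmuR (L v) - lmuR C <= lmuR (L' v).
Proof.
have C01 : lmeas01 C := lmeas01_sub (L01 u) mC CLu.
have LvC : lmuR (L v `&` C) <= lmuR C by apply: le_lmuR C01 (lmeas01I (L01 v) mC).1 _ => x [].
by have := lmuRDI (L01 v) mC; rewrite /L'; lra.
Qed.

Lemma sum_emaxR_shift (P : pred {set V}) :
  \sum_(f in M | P f) emaxR g' f = \sum_(f in M | P f) emaxR g f - (if P e then lmuR C else 0).
Proof.
have same f : (f \in M) && P f && (f != e) -> emaxR g' f = emaxR g f.
  by move=> /andP[/andP[fM _] fe]; apply: emaxR_shift_out => x; exact: (matching_disjoint hM fM uwM fe).
have [Pe|Pe] := ifPn; last first.
  rewrite subr0; apply: eq_bigr => f fMP; apply: same; rewrite fMP.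
  by apply: contraNneq Pe => <-; case/andP: fMP.
have eMP : (e \in M) && P e by rewrite uwM.
rewrite (bigD1 e eMP) [X in _ = X - _](bigD1 e eMP) /= (eq_bigr _ same).
by rewrite (emaxR_shift (x := u)) ?set21 ?lmuR_ge0 ?Cu //; ring.
Qed.

Lemma matching_conds_shift : matching_conds g L -> matching_conds g' L'.
Proof.
case=> [condA condM condE]; split => [v vNVM|v vVM|a b ab abM].
- have := condA v vNVM; have := lmuR_setD_piece v.
  have allM h : \sum_(f in M) emaxR h f = \sum_(f in M | xpredT f) emaxR h f.
    by apply: eq_bigl => f; rewrite andbT.
  have sumA : \sum_(x | x \notin VM M) g' x = \sum_(x | x \notin VM M) g x.
    apply: eq_bigr => x xNVM; rewrite /g' shift_demand_out //.
    by apply: contra xNVM => xe; apply/bigcupP; exists e.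
  by rewrite !allM (sum_emaxR_shift xpredT) sumA /=; lra.
- have := condM v vVM; have := lmuR_setD_piece v.
  rewrite (sum_emaxR_shift (fun f => v \notin f)) /g' /shift_demand /=.
  by case: ifP => _ /=; lra.
- have := condE a b ab abM; have := lmuR_setD_piece a; have := lmuR_setD_piece b.
  by rewrite sum_shift_demand cards2 uw mulr2n; lra.
Qed.

Lemma resolved_shift_edge : C `<=` L u `&` L w ->
  lmuR C = Num.min (g u) (Num.min (g w) (lmuR (L u `&` L w))) -> resolved g' L' u w.
Proof.
move=> CI Ct; have [mu mw] : u \in e /\ w \in e by rewrite set21 set22.
rewrite /resolved /g' !shift_demand_in // /L' setIDAC setDDl setUid setIDA.
rewrite lmuRD //; last exact: lmeas01I (L01 u) (L01 w).1.
rewrite Ct; case: (min3_cases (g u) (g w) (lmuR (L u `&` L w))) => ->; rewrite subrr.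
- exact: Or31.
- exact: Or32.
- exact: Or33.
Qed.

Lemma resolved_shift a b : [set a; b]%SET \in M -> [set a; b]%SET != e ->
  resolved g L a b -> resolved g' L' a b.
Proof.
move=> abM abe res.
have [aNe bNe] : a \notin e /\ b \notin e.
  by split; apply: matching_disjoint abM uwM abe _; rewrite ?set21 ?set22.
rewrite /resolved /g' !shift_demand_out //; case: res => [->|->|I0]; [exact: Or31|exact: Or32|].
apply: Or33; apply/le_anti; rewrite lmuR_ge0 andbT -I0.
apply: le_lmuR (lmeas01I (L01 a) (L01 b).1) _ _; last by move=> x [[? _] [? _]].
exact: measurableI (measurableD (L01 a).1 mC) (measurableD (L01 b).1 mC).
Qed.

End ShiftEdge.

Lemma resolved_sym g L a b : resolved g L a b -> resolved g L b a.
Proof. by rewrite /resolved setIC; case=> ?; [exact: Or32 | exact: Or31 | exact: Or33]. Qed.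

Theorem matching_fcoloring g L (P : {set {set V}}) : is_matching M -> P \subset M ->
  (forall v, lmeas01 (L v)) -> (forall v, 0 <= g v) -> matching_conds g L ->
  (forall u w, u != w -> [set u; w]%SET \in M :\: P -> resolved g L u w) ->
  exists phi, fcoloring [set: V]%SET (Hadj M) L g phi.
Proof.
move=> hM; elim: {P}#|P|.+1 {-2}P (ltnSn #|P|) g L => // n IH P ltPn g L PM L01 g0 conds res.
have [P0|[e eP]] := set_0Vmem P.
  have [|phi col] := hall_fcoloring L01 g0 (resolved_hall_cond hM L01 g0 conds _).
    by move=> u w uw uwM; apply: res; rewrite // P0 finset.setD0.
  by exists phi; apply: fcoloring_subrel col => u w /andP[].
have eM := fintype.subsetP PM e eP; have [u [w [uw Ee]]] := matching_edgeP hM eM; subst e.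
pose t := Num.min (g u) (Num.min (g w) (lmuR (L u `&` L w))).
have [t0 tu tw tI] : [/\ 0 <= t, t <= g u, t <= g w & t <= lmuR (L u `&` L w)].
  by rewrite /t !le_min !ge_min !lexx !orbT !g0 lmuR_ge0.
have [|C [mC CI Ct]] := lmeas01_chunk (lmeas01I (L01 u) (L01 w).1) (t := t).
  by rewrite t0 tI.
have CL : {in [set u; w]%SET, forall x, C `<=` L x} by move=> x /set2P[] -> y /CI [].
have Cg : {in [set u; w]%SET, forall x, lmuR C <= g x} by rewrite Ct => x /set2P[] ->.
set g' := shift_demand [set u; w]%SET (lmuR C) g; set L' := fun v => L v `\` C.
have res' a b : a != b -> [set a; b]%SET \in M :\: (P :\ [set u; w]%SET) -> resolved g' L' a b.
  rewrite finset.in_setD finset.in_setD1 negb_and negbK.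
  move=> ab /andP[/orP[/eqP abe|abNP] abM].
    have res_e : resolved g' L' u w by apply: resolved_shift_edge.
    by case: (eq_set2P ab abe) => -[-> ->] //; exact: resolved_sym.
  have abe : [set a; b]%SET != [set u; w]%SET by apply: contraNneq abNP => ->.
  by apply: (resolved_shift hM L01 eM mC abM abe); apply: res; rewrite // finset.in_setD abNP.
have ltP : (#|P :\ [set u; w]%SET| < n)%N by rewrite (cardsD1 [set u; w]%SET P) eP in ltPn.
have P'M : P :\ [set u; w]%SET \subset M := fintype.subset_trans (subD1set _ _) PM.
have [phi col] := IH _ ltP g' L' P'M (fun v => lmeas01D (L01 v) mC) (shift_demand_ge0 g0 Cg)
  (matching_conds_shift hM L01 uw eM mC (CL u (set21 u w)) (Cg u (set21 u w)) conds) res'.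
exists (fun x => if x \in [set u; w]%SET then phi x `|` C else phi x).
by apply: fcoloring_add_piece col => // x y xe ye; exact (matching_edge_not_Hadj hM eM xe ye).
Qed.

End MatchingConditions.

Local Close Scope classical_set_scope.
Unset Implicit Arguments.

Theorem lemma2p11 (R : realType) (V : finType) (M : {set {set V}})
    (g : V -> rat) (L : V -> set R) :
  is_matching M -> demand g -> frac_list_assignment L ->
  (forall v, v \notin VM M ->
     ((ratr (\sum_(u | u \notin VM M) g u + \sum_(e in M) emax g e) : R)%:E
        <= lmu (L v))%E) ->
  (forall v, v \in VM M ->
     ((ratr (g v + \sum_(e in M | v \notin e) emax g e) : R)%:E
        <= lmu (L v))%E) ->
  (forall u v, u != v -> ([set u; v] \in M)%SET ->
     ((ratr (\sum_w g w) : R)%:E <= lmu (L u) + lmu (L v))%E) ->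
  exists phi : V -> set R, frac_coloring M g L phi.
Proof.
move=> hM hg L01 condA condM condE.
pose gR v : R := ratr (g v).
have gR0 v : 0 <= gR v by rewrite ler0q; case/andP: (hg v).
have ratr_sum_emax (Q : pred {set V}) :
    ratr (\sum_(e | Q e) emax g e) = \sum_(e | Q e) emaxR gR e :> R.
  by rewrite rmorph_sum; apply: eq_bigr => e _; exact: ratr_emax.
have conds : matching_conds M gR L.
  split=> [v /condA|v /condM|u v uv /(condE u v uv)]; rewrite ?lmu_lmuR // -?EFinD lee_fin.
  - by rewrite rmorphD -ratr_sum_emax -rmorph_sum.
  - by rewrite rmorphD -ratr_sum_emax.
  - by rewrite -rmorph_sum.
have [phi [col disj]] := matching_fcoloring hM (fintype.subxx M) L01 gR0 conds
  (fun u w _ => ltac:(by rewrite finset.setDv inE)).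
exists phi; split=> [v|u v uv]; last by apply: disj; rewrite ?inE.
have [mphi phiL gphi] := col v (finset.in_setT v); split => //.
by rewrite lmu_lmuR ?lee_fin //; exact: lmeas01_sub (L01 v) mphi phiL.
Qed.
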